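(* Let $K\ge2$, $0<q<p$ with $p+(K-1)q=1$, and $\phi\in\Delta$. If $\theta$ is an MLE for $\phi$, then for any $i,j\in\{1,\dots,K\}$, $\phi_i\le\phi_j$ implies $\theta_i\le\theta_j$.
   Context: $\Delta=\{\theta\in\mathbb{R}^K:\theta_i\ge0,\sum_i\theta_i=1\}$. $\mathcal{M}(\theta)_y=q+(p-q)\theta_y$. $\theta\in\Delta$ is an MLE for $\phi$ if it minimizes $D_{KL}(\phi,\mathcal{M}(\theta))=\sum_i\phi_i\log(\phi_i/\mathcal{M}(\theta)_i)$ (convention $0\log(0/\cdot)=0$) over $\Delta$ (for an empirical histogram $\phi$ of observed outputs $y_1,\dots,y_N$ this is equivalent to maximizing the likelihood $\prod_u\mathcal{M}(\theta)_{y_u}$). *)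

From mathcomp Require Import all_boot all_order all_algebra.
From mathcomp Require Import all_classical all_reals exp.
Set Implicit Arguments. Unset Strict Implicit. Unset Printing Implicit Defensive.
Import Order.TTheory GRing.Theory Num.Theory.
Local Open Scope ring_scope.

Definition simplex (R : realType) (K : nat) (theta : 'I_K -> R) : Prop :=
  (forall i, 0 <= theta i) /\ \sum_(i < K) theta i = 1.

Definition model (R : realType) (K : nat) (p q : R) (theta : 'I_K -> R) (y : 'I_K) : R :=
  q + (p - q) * theta y.

Definition KL (R : realType) (K : nat) (phi mu : 'I_K -> R) : R :=
  \sum_(i < K) (if phi i == 0 then 0 else phi i * ln (phi i / mu i)).

Definition is_MLE (R : realType) (K : nat) (p q : R) (phi theta : 'I_K -> R) : Prop :=
  simplex theta /\
  forall theta' : 'I_K -> R, simplex theta' ->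
    KL phi (model p q theta) <= KL phi (model p q theta').

(** Since the entropy term of [KL φ (M θ)] does not depend on [θ], an MLE
    maximises the log-likelihood [Σ_k φ_k ln(q + (p - q) θ_k)] over the simplex.
    A [θ] with [φ_i <= φ_j] but [θ_i > θ_j] is improved by changing two
    coordinates.  If [φ_j = 0], then [φ_i = 0] too, and moving the mass [θ_i]
    onto a coordinate [k] with [φ_k > 0] strictly increases the likelihood.
    Otherwise replacing [θ_i] and [θ_j] by their average [a] gains
    [φ_i (ln m_a - ln m_i) + φ_j (ln m_a - ln m_j)], which is positive because
    [ln m_a > ln m_j] and, by strict concavity of [ln],
    [2 ln m_a > ln m_i + ln m_j]. *)
From mathcomp Require Import all_boot all_order all_algebra.
From mathcomp Require Import all_classical all_reals exp.
From mathcomp Require Import ring lra.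
Import Order.TTheory GRing.Theory Num.Theory.
Local Open Scope ring_scope.
Set Implicit Arguments. Unset Strict Implicit.

Definition update2 (T : Type) (K : nat) (f : 'I_K -> T) (i j : 'I_K) (a b : T) :=
  fun x => if x == i then a else if x == j then b else f x.

Lemma big_update2 (T : Type) (V : zmodType) (K : nat) (G : 'I_K -> T -> V)
    (f : 'I_K -> T) (i j : 'I_K) (a b : T) : i != j ->
  \sum_(x < K) G x (update2 f i j a b x) =
  \sum_(x < K) G x (f x) + (G i a - G i (f i)) + (G j b - G j (f j)).
Proof.
move=> ij; have split_ij (h : 'I_K -> V) :
    \sum_(x < K) h x = h i + (h j + \sum_(x < K | (x != i) && (x != j)) h x).
  by rewrite (bigD1 i) //= (bigD1 j) 1?eq_sym.
have ji : (j == i) = false by rewrite eq_sym (negbTE ij).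
rewrite !split_ij /update2 eqxx ji eqxx.
rewrite (eq_bigr (fun x => G x (f x))) => [|x /andP[/negbTE -> /negbTE ->] //].
rewrite [_ + _ + (_ - G i _)]addrC (addrA (G i a - _)) subrK -(addrA (G i a)).
by congr (_ + _); rewrite addrC addrA subrK.
Qed.

Lemma simplex_update2 (R : realType) (K : nat) (theta : 'I_K -> R)
    (i j : 'I_K) (a b : R) :
  simplex theta -> i != j -> 0 <= a -> 0 <= b -> a + b = theta i + theta j ->
  simplex (update2 theta i j a b).
Proof.
move=> [th0 th1] ij a0 b0 ab; split.
  by move=> x; rewrite /update2; case: ifP => // _; case: ifP.
rewrite (big_update2 (fun _ v => v)) // th1; lra.
Qed.

Lemma simplex_has_pos (R : realType) (K : nat) (phi : 'I_K -> R) :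
  simplex phi -> exists k, 0 < phi k.
Proof.
move=> [phi0 phi1]; case: (pickP (fun k => 0 < phi k)) => [k ? | none]; first by exists k.
suff : \sum_(k < K) phi k = 0 by lra.
by apply: big1 => k _; apply/eqP; rewrite eq_le phi0 andbT leNgt none.
Qed.

Lemma lnD_lt_mid (R : realType) (x y : R) : 0 < x -> 0 < y -> x != y ->
  ln x + ln y < ln ((x + y) / 2) + ln ((x + y) / 2).
Proof.
move=> x0 y0 xy; have m0 : 0 < (x + y) / 2 by lra.
rewrite -!lnM ?posrE // ltr_ln ?posrE ?(mulr_gt0 x0 y0) ?(mulr_gt0 m0 m0) //.
have -> : (x + y) / 2 * ((x + y) / 2) = x * y + (x - y) ^+ 2 / 4 by field.
by rewrite ltrDl divr_gt0 // exprn_even_gt0 //= subr_eq0.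
Qed.

Lemma weighted_gain_gt0 (R : realDomainType) (a b u v : R) :
  0 <= a <= b -> 0 < b -> 0 < v -> 0 < u + v -> 0 < a * u + b * v.
Proof.
move=> /andP[a0 ab] b0 v0 uv.
have -> : a * u + b * v = a * (u + v) + (b - a) * v by ring.
case: (eqVneq a b) => [-> | a_neq_b].
  by rewrite subrr mul0r addr0; apply: mulr_gt0.
have : 0 <= a * (u + v) by rewrite mulr_ge0 // ltW.
have : 0 < (b - a) * v by rewrite mulr_gt0 // subr_gt0 lt_neqAle a_neq_b ab.
lra.
Qed.

Section MaximumLikelihood.

Variables (R : realType) (K : nat) (p q : R) (phi : 'I_K -> R).
Hypotheses (q_gt0 : 0 < q) (q_lt_p : q < p) (phi_ge0 : forall k, 0 <= phi k).

Let m (v : R) : R := q + (p - q) * v.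

Lemma m_gt0 v : 0 <= v -> 0 < m v.
Proof. by move=> v0; rewrite /m ltr_wpDr ?mulr_ge0 // subr_ge0 ltW. Qed.

Lemma ln_m_lt v w : 0 <= v -> v < w -> ln (m v) < ln (m w).
Proof.
move=> v0 vw; rewrite ltr_ln ?posrE ?m_gt0 //; last by rewrite (le_trans v0) ?ltW.
by rewrite ltrD2l ltr_pM2l // subr_gt0.
Qed.

Definition loglik (theta : 'I_K -> R) : R :=
  \sum_(k < K) phi k * ln (model p q theta k).

Lemma KL_model theta : (forall k, 0 <= theta k) ->
  KL phi (model p q theta) = \sum_(k < K) phi k * ln (phi k) - loglik theta.
Proof.
move=> th0; rewrite /KL /loglik -sumrB; apply: eq_bigr => k _.
case: eqP => [->|/eqP phik]; first by rewrite !mul0r subr0.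
have phik_gt0 : 0 < phi k by rewrite lt_neqAle eq_sym phik phi_ge0.
by rewrite ln_div ?posrE ?m_gt0 // mulrBr.
Qed.

Lemma MLE_loglik_max theta : is_MLE p q phi theta ->
  forall t, simplex t -> loglik t <= loglik theta.
Proof.
move=> [[th0 _] th_min] t [t0 t1]; have := th_min t (conj t0 t1).
by rewrite !KL_model // lerD2l lerN2.
Qed.

Lemma loglik_update2 theta i j a b : i != j ->
  loglik (update2 theta i j a b) = loglik theta
    + phi i * (ln (m a) - ln (m (theta i))) + phi j * (ln (m b) - ln (m (theta j))).
Proof.
move=> ij; rewrite /loglik (big_update2 (fun x v => phi x * ln (m v))) //.
by rewrite !mulrBr.
Qed.

Lemma MLE_phi_eq0 theta i : simplex phi -> is_MLE p q phi theta ->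
  phi i = 0 -> theta i = 0.
Proof.
move=> phiS thMLE phii; have [[th0 _] _] := thMLE.
apply/eqP; rewrite eq_le th0 andbT leNgt; apply/negP => thi_gt0.
have [k phik] := simplex_has_pos phiS.
have ik : i != k by apply: contraTneq phik => <-; rewrite phii ltxx.
have tS : simplex (update2 theta i k 0 (theta k + theta i)).
  apply: (simplex_update2 thMLE.1 ik (lexx 0) (addr_ge0 (th0 k) (th0 i))).
  by rewrite add0r addrC.
have := MLE_loglik_max thMLE tS; rewrite loglik_update2 // phii mul0r addr0.
have : 0 < phi k * (ln (m (theta k + theta i)) - ln (m (theta k))).
  by rewrite mulr_gt0 // subr_gt0 ln_m_lt // ltrDl.
lra.
Qed.

Lemma MLE_le_of_phi_gt0 theta i j : is_MLE p q phi theta ->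
  phi i <= phi j -> 0 < phi j -> theta i <= theta j.
Proof.
move=> thMLE phi_ij phij; have [[th0 _] _] := thMLE.
rewrite leNgt; apply/negP => th_ji.
have ij : i != j by apply: contraTneq th_ji => ->; rewrite ltxx.
pose a := (theta i + theta j) / 2.
have a0 : 0 <= a by rewrite /a; have := th0 i; have := th0 j; lra.
have tS : simplex (update2 theta i j a a).
  by apply: (simplex_update2 thMLE.1 ij a0 a0); rewrite /a; field.
have := MLE_loglik_max thMLE tS; rewrite loglik_update2 //.
have m_mid : m a = (m (theta i) + m (theta j)) / 2 by rewrite /m /a; field.
have m_ji : m (theta j) < m (theta i) by rewrite ltrD2l ltr_pM2l // subr_gt0.
have : 0 < phi i * (ln (m a) - ln (m (theta i))) + phi j * (ln (m a) - ln (m (theta j))).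
  apply: weighted_gain_gt0; rewrite ?phi_ge0 //.
    by rewrite subr_gt0 ltr_ln ?posrE ?m_gt0 // m_mid; lra.
  have := lnD_lt_mid (m_gt0 (th0 i)) (m_gt0 (th0 j)) (negbT (gt_eqF m_ji)).
  by rewrite m_mid; lra.
lra.
Qed.

End MaximumLikelihood.

Theorem theorem6 (R : realType) (K : nat) (p q : R) (phi theta : 'I_K -> R) :
  (2 <= K)%N -> 0 < q -> q < p -> p + (K - 1)%:R * q = 1 ->
  simplex phi -> is_MLE p q phi theta ->
  forall i j : 'I_K, phi i <= phi j -> theta i <= theta j.
Proof.
move=> _ q_gt0 q_lt_p _ phiS thMLE i j phi_ij.
have phi_ge0 := phiS.1.
case: (eqVneq (phi j) 0) => [phij | phij_neq0].
  have phii : phi i = 0 by apply/eqP; rewrite eq_le phi_ge0 andbT -phij.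
  by rewrite (MLE_phi_eq0 q_gt0 q_lt_p phi_ge0 phiS thMLE phii); exact: thMLE.1.1.
apply: (MLE_le_of_phi_gt0 q_gt0 q_lt_p phi_ge0 thMLE phi_ij).
by rewrite lt_neqAle eq_sym phij_neq0 phi_ge0.
Qed.
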